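(* Let $R,W,Q$ be symmetric BIDMCs and $p\in(0,1)$. If $pR+(1-p)W\preccurlyeq pR+(1-p)Q$, then $W\preccurlyeq Q$.
   Context: A binary-input discrete memoryless channel (BIDMC) $W$ has input $x$ uniformly distributed on $\{0,1\}$, a discrete output alphabet and transition probabilities $\Pr(y\mid x)$. Its LR-profile is $P_W(\varepsilon)=\Pr\big(\mathcal L_W(y)=\varepsilon/(1-\varepsilon)\big)$, where $\mathcal L_W(\hat y)=\Pr(y=\hat y\mid x=0)/\Pr(y=\hat y\mid x=1)$; $W\cong W'$ if their LR-profiles coincide. $W'\preccurlyeq W$ ($W'$ is a degradation of $W$) if there is a channel $T$ from the output alphabet $\mathcal Y$ of $W$ to that of $W'$ with $\Pr(y'\mid x'=a)=\sum_{y\in\mathcal Y}\Pr(y\mid x=a)T(y'\mid y)$, $a\in\{0,1\}$. For BIDMCs $W_1,W_2$ and $p\in[0,1]$, $pW_1+(1-p)W_2$ is the random switching channel that, with probability $p$ (resp. $1-p$), independently of the input, sends the input through $W_1$ (resp. $W_2$) and outputs the channel output together with the index of the channel used. A BIDMC is symmetric if $P_W(\varepsilon)=P_W(1-\varepsilon)$ for all $\varepsilon\in[0,1]$. *)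

From HB Require Import structures.
From mathcomp Require Import all_boot all_order all_algebra.
From mathcomp Require Import reals.
Set Implicit Arguments. Unset Strict Implicit. Unset Printing Implicit Defensive.
Import Order.TTheory GRing.Theory Num.Theory.
Local Open Scope ring_scope.

(* A BIDMC with finite output alphabet Y is given by its transition
   probabilities W a y = Pr(y | x = a); the input bit 0 is [false], 1 is [true]. *)
Definition is_bidmc (K : realType) (Y : finType) (W : bool -> Y -> K) : Prop :=
  (forall a y, 0 <= W a y) /\ (forall a, \sum_(y : Y) W a y = 1).

(* LR-profile: P_W(eps) = Pr( L_W(y) = eps/(1-eps) ) with x uniform, so
   Pr(y) = (W 0 y + W 1 y)/2.  The event L_W(y) = W 0 y / W 1 y = eps/(1-eps)
   is written in cross-multiplied form W 0 y * (1 - eps) = eps * W 1 y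
   (this handles L = +oo <-> eps = 1; outputs with Pr(y) = 0 contribute 0). *)
Definition LRprofile (K : realType) (Y : finType) (W : bool -> Y -> K)
  (eps : K) : K :=
  \sum_(y : Y | W false y * (1 - eps) == eps * W true y)
     (W false y + W true y) / 2.

Definition symmetric_bidmc (K : realType) (Y : finType) (W : bool -> Y -> K)
  : Prop :=
  forall eps : K, 0 <= eps <= 1 -> LRprofile W eps = LRprofile W (1 - eps).

Definition degraded (K : realType) (Y' Y : finType)
  (W' : bool -> Y' -> K) (W : bool -> Y -> K) : Prop :=
  exists T : Y -> Y' -> K,
    [/\ forall y y', 0 <= T y y',
        forall y, \sum_(y' : Y') T y y' = 1 &
        forall a y', W' a y' = \sum_(y : Y) W a y * T y y'].

(* Random switching channel p W1 + (1-p) W2: output (index, channel output),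
   encoded as inl y1 (channel W1 used) / inr y2 (channel W2 used). *)
Definition switch (K : realType) (Y1 Y2 : finType) (p : K)
  (W1 : bool -> Y1 -> K) (W2 : bool -> Y2 -> K) : bool -> (Y1 + Y2)%type -> K :=
  fun a y => match y with
             | inl y1 => p * W1 a y1
             | inr y2 => (1 - p) * W2 a y2
             end.

From HB Require Import structures.
From mathcomp Require Import all_boot all_order all_algebra.
From mathcomp Require Import reals.
From mathcomp Require Import ring lra.
Set Implicit Arguments. Unset Strict Implicit. Unset Printing Implicit Defensive.
Import Order.TTheory GRing.Theory Num.Theory.
Local Open Scope ring_scope.

(* For a payoff u : bool -> Z -> K, the Bayes value
   V_u(C) = sum_y max_z sum_a u(a,z) C(a,y) of a channel C does not increase
   under degradation and is affine under random switching.  The hypothesis thus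
   gives p V_u(R) + (1-p) V_u(W) <= p V_u(R) + (1-p) V_u(Q), i.e.
   V_u(W) <= V_u(Q) for every u.  Conversely, if W is not a degradation of Q,
   Farkas' lemma applied to the linear system T >= 0, sum_z T(y,z) = 1,
   W(a,z) = sum_y Q(a,y) T(y,z) yields a payoff u with V_u(Q) < V_u(W). *)

Section Farkas.
Variables (K : realFieldType) (J : finType).

Definition dot (y v : J -> K) := \sum_j y j * v j.

Lemma dotZBr (y u v : J -> K) c d :
  dot y (fun j => c * u j - d * v j) = c * dot y u - d * dot y v.
Proof. by rewrite /dot !mulr_sumr -sumrB; apply: eq_bigr => j _; ring. Qed.

Lemma dotZBl (u v y : J -> K) c d :
  dot (fun j => c * u j - d * v j) y = c * dot u y - d * dot v y.
Proof. by rewrite /dot !mulr_sumr -sumrB; apply: eq_bigr => j _; ring. Qed.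

Definition conic (I : finType) (A : I -> J -> K) (b : J -> K) :=
  exists2 lam : I -> K, forall i, 0 <= lam i &
    forall j, b j = \sum_i lam i * A i j.

Definition separating (I : finType) (A : I -> J -> K) (b y : J -> K) :=
  (forall i, 0 <= dot y (A i)) /\ dot y b < 0.

Lemma farkas0 (A : 'I_0 -> J -> K) b : conic A b \/ exists y, separating A b y.
Proof.
have [/forallP b0|] := boolP [forall j, b j == 0].
  by left; exists (fun=> 0) => // j; rewrite big_ord0; apply/eqP.
rewrite negb_forall => /existsP [j0 bj0].
right; exists (fun j => - b j); split=> [[]//|].
rewrite /dot (bigD1 j0) //= mulNr -expr2.
have : 0 < b j0 ^+ 2 by rewrite exprn_even_gt0.
have : \sum_(j | j != j0) - b j * b j <= 0.
  by apply: sumr_le0 => j _; rewrite mulNr -expr2 oppr_le0 sqr_ge0.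
lra.
Qed.

Section FarkasStep.
Variables (n : nat) (A : 'I_n.+1 -> J -> K).
Let a := A ord0.
Let A1 (i : 'I_n) := A (lift ord0 i).

Definition ord_cons (c : K) (lam : 'I_n -> K) (i : 'I_n.+1) : K :=
  if unlift ord0 i is Some k then lam k else c.

Lemma ord_cons_ge0 c lam :
  0 <= c -> (forall i, 0 <= lam i) -> forall i, 0 <= ord_cons c lam i.
Proof. by move=> c0 l0 i; rewrite /ord_cons; case: unlift. Qed.

Lemma sum_ord_cons c lam j :
  \sum_i ord_cons c lam i * A i j = c * a j + \sum_i lam i * A1 i j.
Proof.
rewrite big_ord_recl /ord_cons unlift_none.
by congr (_ + _); apply: eq_bigr => i _; rewrite liftK.
Qed.

Lemma conic_cons b : conic A1 b -> conic A b.
Proof.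
case=> lam l0 hl; exists (ord_cons 0 lam); first exact: ord_cons_ge0.
by move=> j; rewrite sum_ord_cons mul0r add0r.
Qed.

Lemma separating_cons b y :
  separating A1 b y -> 0 <= dot y a -> separating A b y.
Proof.
case=> hy yb ya; split=> // i.
by case: (unliftP ord0 i) => [k ->|->] //; apply: hy.
Qed.

(* Fourier-Motzkin elimination of the first generator: [proj y a = 0], and
   [proj y v] is orthogonal to [y]. *)
Definition proj (y v : J -> K) j := dot y v * a j - dot y a * v j.

Lemma conic_proj b y : separating A1 b y -> dot y a < 0 ->
  conic (fun i => proj y (A1 i)) (proj y b) -> conic A b.
Proof.
case=> hy yb ya [lam l0 hl].
pose S := \sum_i lam i * dot y (A1 i).
have S0 : 0 <= S by apply: sumr_ge0 => i _; apply: mulr_ge0.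
exists (ord_cons ((S - dot y b) / - dot y a) lam).
  by apply: ord_cons_ge0 => //; apply: divr_ge0; lra.
move=> j; rewrite sum_ord_cons.
have := hl j; rewrite /proj.
have -> : \sum_i lam i * (dot y (A1 i) * a j - dot y a * A1 i j) =
          S * a j - dot y a * \sum_i lam i * A1 i j.
  by rewrite /S mulr_suml mulr_sumr -sumrB; apply: eq_bigr => i _; ring.
have nz : - dot y a != 0 by rewrite oppr_eq0 lt_eqF.
move=> e; apply: (mulfI nz); rewrite mulrDr mulrA mulrCA mulfV // mulr1.
lra.
Qed.

Lemma separating_proj b y y' :
  separating (fun i => proj y (A1 i)) (proj y b) y' ->
  separating A b (fun j => dot y' a * y j - dot y a * y' j).
Proof.
have dot_proj v : dot (fun j => dot y' a * y j - dot y a * y' j) v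
                  = dot y' (proj y v).
  by rewrite dotZBl /proj dotZBr; ring.
case=> hy yb; split; last by rewrite dot_proj.
move=> i; case: (unliftP ord0 i) => [k ->|->]; first by rewrite dot_proj; apply: hy.
by rewrite dotZBl -/a mulrC subrr.
Qed.
End FarkasStep.

Lemma farkas_ord n (A : 'I_n -> J -> K) b :
  conic A b \/ exists y, separating A b y.
Proof.
elim: n A b => [|n IH] A b; first exact: farkas0.
case: (IH (fun i => A (lift ord0 i)) b) => [|[y sep]]; first by left; apply: conic_cons.
have [ya0|ya0] := leP 0 (dot y (A ord0)).
  by right; exists y; apply: separating_cons.
case: (IH (fun i => proj A y (A (lift ord0 i))) (proj A y b)) => [cone|[y' sep']].
  by left; apply: conic_proj cone.
by right; eexists; apply: separating_proj sep'.
Qed.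

Lemma farkas (I : finType) (A : I -> J -> K) b :
  conic A b \/ exists y, separating A b y.
Proof.
case: (farkas_ord (fun i : 'I_#|I| => A (enum_val i)) b) => [[lam l0 hl]|[y [hy yb]]].
  left; exists (fun x => lam (enum_rank x)) => // j.
  rewrite hl (reindex (@enum_val I I)) /=; last exact/onW_bij/enum_val_bij.
  by apply: eq_bigr => i _; rewrite enum_valK.
by right; exists y; split=> // x; rewrite -(enum_rankK x); apply: hy.
Qed.
End Farkas.

Section BayesValue.
Variables (K : realType) (Z : finType) (u : bool -> Z -> K) (z0 : Z).

Definition gain (z : Z) (x : bool -> K) := \sum_a u a z * x a.

Definition best_gain (x : bool -> K) := \big[Order.max/gain z0 x]_z gain z x.

Definition bayes_value (Y : finType) (C : bool -> Y -> K) :=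
  \sum_y best_gain (C ^~ y).

Lemma gain_le_best_gain z x : gain z x <= best_gain x.
Proof. exact: le_bigmax. Qed.

Lemma best_gain_le x c : (forall z, gain z x <= c) -> best_gain x <= c.
Proof. by move=> h; apply: bigmax_le => // z _; apply: h. Qed.

Lemma gainZ z c x : gain z (fun a => c * x a) = c * gain z x.
Proof. by rewrite /gain mulr_sumr; apply: eq_bigr => a _; ring. Qed.

Lemma best_gainZ c x : 0 < c -> best_gain (fun a => c * x a) = c * best_gain x.
Proof.
move=> c0; apply/le_anti/andP; split.
  by apply: best_gain_le => z; rewrite gainZ ler_pM2l // gain_le_best_gain.
rewrite -ler_pdivlMl //; apply: best_gain_le => z.
by rewrite ler_pdivlMl // -gainZ gain_le_best_gain.
Qed.

Lemma bayes_value_degraded (Y' Y : finType) (C' : bool -> Y' -> K)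
    (C : bool -> Y -> K) :
  degraded C' C -> bayes_value C' <= bayes_value C.
Proof.
case=> T [T0 T1 hC]; rewrite /bayes_value.
apply: (@le_trans _ _ (\sum_y' \sum_y T y y' * best_gain (C ^~ y))).
  apply: ler_sum => y' _; apply: best_gain_le => z.
  have -> : gain z (C' ^~ y') = \sum_y T y y' * gain z (C ^~ y).
    rewrite /gain; under eq_bigr do rewrite hC mulr_sumr.
    rewrite exchange_big; apply: eq_bigr => y _.
    by rewrite mulr_sumr; apply: eq_bigr => a _; ring.
  by apply: ler_sum => y _; rewrite ler_wpM2l // gain_le_best_gain.
rewrite exchange_big /=; apply: ler_sum => y _.
by rewrite -mulr_suml T1 mul1r.
Qed.

Lemma bayes_value_switch (Y1 Y2 : finType) (p : K) (C1 : bool -> Y1 -> K)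
    (C2 : bool -> Y2 -> K) : 0 < p < 1 ->
  bayes_value (switch p C1 C2) = p * bayes_value C1 + (1 - p) * bayes_value C2.
Proof.
case/andP=> p0 p1; rewrite /bayes_value big_sumType /= !mulr_sumr.
by congr (_ + _); apply: eq_bigr => y _; rewrite best_gainZ // subr_gt0.
Qed.
End BayesValue.

Lemma sum_mul_delta (R : pzSemiRingType) (I : finType) (F : I -> R) i :
  \sum_j F j * (i == j)%:R = F i.
Proof.
rewrite (bigD1 i) //= eqxx mulr1 big1 ?addr0 // => j; rewrite eq_sym => /negbTE ->.
by rewrite mulr0.
Qed.

Lemma sum_pair (R : nmodType) (I1 I2 : finType) (F : I1 * I2 -> R) :
  \sum_x F x = \sum_i \sum_j F (i, j).
Proof. by rewrite pair_bigA; apply: eq_bigr => -[]. Qed.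

Section DegradationDuality.
Variables (K : realType) (Y Z : finType) (W : bool -> Z -> K) (Q : bool -> Y -> K).

(* Columns are the entries (y, z) of a degrading kernel T; rows are the
   constraints W a z = sum_y Q a y * T y z and sum_z T y z = 1. *)
Definition degradation_matrix (x : Y * Z) (j : (bool * Z + Y)%type) : K :=
  match j with
  | inl (a, z) => Q a x.1 * (x.2 == z)%:R
  | inr y => (x.1 == y)%:R
  end.

Definition degradation_rhs (j : (bool * Z + Y)%type) : K :=
  match j with inl (a, z) => W a z | inr _ => 1 end.

Lemma conic_degraded : conic degradation_matrix degradation_rhs -> degraded W Q.
Proof.
case=> lam l0 hl; exists (fun y z => lam (y, z)); split=> // [y|a z].
  rewrite -[RHS]/(degradation_rhs (inr y)) hl sum_pair /=.
  under [RHS]eq_bigr do rewrite -mulr_suml eq_sym.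
  by rewrite sum_mul_delta.
rewrite -[LHS]/(degradation_rhs (inl (a, z))) hl sum_pair /=; apply: eq_bigr => y _.
under eq_bigr do rewrite mulrCA eq_sym.
by rewrite -mulr_sumr sum_mul_delta.
Qed.

Lemma separating_bayes_gap (z0 : Z) v :
  separating degradation_matrix degradation_rhs v ->
  exists u, bayes_value u z0 Q < bayes_value u z0 W.
Proof.
case=> hv hb; pose u a z := - v (inl (a, z)); exists u.
have dot_col y z :
    dot v (degradation_matrix (y, z)) = v (inr y) - gain u z (Q ^~ y).
  rewrite /dot big_sumType /= sum_pair /= sum_mul_delta.
  under eq_bigr => a _ do under eq_bigr => j _ do rewrite mulrCA.
  under eq_bigr => a _ do rewrite -mulr_sumr sum_mul_delta.
  by rewrite /gain !big_bool /u /=; ring.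
have dot_rhs : dot v degradation_rhs =
    \sum_y v (inr y) - \sum_z gain u z (W ^~ z).
  rewrite /dot big_sumType /= sum_pair /= exchange_big /= addrC -sumrN.
  under [X in X + _]eq_bigr do rewrite mulr1.
  congr (_ + _); apply: eq_bigr => z _.
  by rewrite /gain -sumrN; apply: eq_bigr => a _; rewrite /u mulNr opprK.
have bayesQ : bayes_value u z0 Q <= \sum_y v (inr y).
  apply: ler_sum => y _; apply: best_gain_le => z.
  by have := hv (y, z); rewrite dot_col subr_ge0.
have bayesW : \sum_z gain u z (W ^~ z) <= bayes_value u z0 W.
  by apply: ler_sum => z _; apply: gain_le_best_gain.
move: hb; rewrite dot_rhs subr_lt0; lra.
Qed.
End DegradationDuality.

Lemma degraded_or_bayes_gap (K : realType) (Y Z : finType)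
    (W : bool -> Z -> K) (Q : bool -> Y -> K) (z0 : Z) :
  degraded W Q \/ exists u, bayes_value u z0 Q < bayes_value u z0 W.
Proof.
case: (farkas (degradation_matrix Q) (degradation_rhs W)) => [cone|[v sep]].
  by left; apply: conic_degraded.
by right; apply: separating_bayes_gap sep.
Qed.

Theorem corollary2 (K : realType) (YR YW YQ : finType)
  (R : bool -> YR -> K) (W : bool -> YW -> K) (Q : bool -> YQ -> K) (p : K) :
  is_bidmc R -> is_bidmc W -> is_bidmc Q ->
  symmetric_bidmc R -> symmetric_bidmc W -> symmetric_bidmc Q ->
  0 < p < 1 ->
  degraded (switch p R W) (switch p R Q) ->
  degraded W Q.
Proof.
move=> _ [_ W1] _ _ _ _ p01 deg.
case: (pickP (@predT YW)) => [z0 _|YW0]; last first.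
  by have := W1 false; rewrite big_pred0 // => /eqP; rewrite eq_sym oner_eq0.
have [//|[u gap]] := degraded_or_bayes_gap W Q z0.
have := bayes_value_degraded u z0 deg; rewrite !bayes_value_switch // lerD2l.
by case/andP: p01 => _ p1; rewrite ler_pM2l ?subr_gt0 // leNgt gap.
Qed.
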